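(* Let $m\ge n$ and let $\Gamma$ be a subset of $M_{m\times n}(\mathbb{C})$ such that for any $A,B\in\Gamma$ there exists a function $p:[0,1]\rightarrow M_{m\times n}(\mathbb{C})$ whose entries are analytic functions on $[0,1]$ with $p(0)=A$, $p(1)=B$ and $p([0,1])\subset\Gamma$. Let $\Gamma_d$ be the set of matrices in $\Gamma$ whose singular values are distinct. If $\Gamma$ contains at least one matrix with distinct singular values, then $\Gamma_d$ is dense in $\Gamma$.
   Context: $M_{m\times n}(\mathbb{C})$ denotes the set of $m\times n$ complex matrices with the topology induced by the Frobenius norm; throughout $m\ge n$. The singular values of $A\in M_{m\times n}(\mathbb{C})$ are the $n$ nonnegative square roots of the eigenvalues of $A^{\ast}A$, counted with multiplicity; distinct means pairwise different. A complex-valued function is analytic on $[0,1]$ if it is the restriction of a function defined on an open interval containing $[0,1]$ which around each point is given by a convergent power series. *)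

From HB Require Import structures.
From mathcomp Require Import all_boot all_order all_algebra.
From mathcomp Require Import reals Rstruct.
From mathcomp Require Import complex.
Set Implicit Arguments. Unset Strict Implicit. Unset Printing Implicit Defensive.
Import Order.TTheory GRing.Theory Num.Theory.
Local Open Scope ring_scope.

Notation RR := Rdefinitions.R.
Notation CC := (complex RR).

Definition cmod (z : CC) : RR := Num.sqrt (complex.Re z ^+ 2 + complex.Im z ^+ 2).

Definition adjmx m n (A : 'M[CC]_(m, n)) : 'M[CC]_(n, m) := (map_mx (@conjc RR) A)^T.

Definition frob m n (A : 'M[CC]_(m, n)) : RR :=
  Num.sqrt (\sum_(i < m) \sum_(j < n) (cmod (A i j)) ^+ 2).

(* s is the list of the n singular values of A, counted with multiplicity:
   the nonnegative square roots of the eigenvalues (with multiplicity) of A^* A *)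
Definition singular_values m n (A : 'M[CC]_(m, n)) (s : seq RR) : Prop :=
  [/\ size s = n, all (fun x => 0 <= x) s &
      char_poly (adjmx A *m A) = \prod_(x <- s) ('X - ((x ^+ 2)%:C)%C%:P)].

Definition distinct_singular_values m n (A : 'M[CC]_(m, n)) : Prop :=
  exists s, singular_values A s /\ uniq s.

Definition series_converges_to (u : nat -> CC) (l : CC) : Prop :=
  forall eps : RR, 0 < eps -> exists N0 : nat, forall N : nat, (N0 <= N)%N ->
    cmod (\sum_(k < N) u k - l) < eps.

Definition analytic_on01 (f : RR -> CC) : Prop :=
  exists (g : RR -> CC) (a b : RR),
    [/\ a < 0, 1 < b,
        (forall t : RR, 0 <= t <= 1 -> g t = f t) &
        forall x0 : RR, a < x0 < b ->
          exists r : RR, 0 < r /\ exists c : nat -> CC,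
            forall x : RR, a < x < b -> `|x - x0| < r ->
              series_converges_to (fun k => c k * ((x - x0)%:C)%C ^+ k) (g x)].

Definition analytic_path_connected m n (Gamma : 'M[CC]_(m, n) -> Prop) : Prop :=
  forall A B, Gamma A -> Gamma B ->
    exists p : RR -> 'M[CC]_(m, n),
      [/\ p 0 = A, p 1 = B,
          (forall t : RR, 0 <= t <= 1 -> Gamma (p t)) &
          forall i j, analytic_on01 (fun t => p t i j)].

(* Let p be an analytic path in Gamma from A = p 0 to a matrix A0 = p 1 with
   distinct singular values.  The singular values of p t are distinct exactly
   when the characteristic polynomial of (p t)^* p t is separable, i.e. when
   its discriminant, the determinant of the Sylvester matrix of that
   polynomial and its derivative, does not vanish.  This discriminant is a
   polynomial in the real and imaginary parts of the entries of p t, hence a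
   real-analytic function of t that is nonzero at t = 1.  By the identity
   theorem it cannot vanish on any interval (0, d), so p t has distinct
   singular values for some t arbitrarily close to 0, where p t is close to A
   by continuity. *)

From Coquelicot Require Import Coquelicot.
From Stdlib Require Import Reals Lra Classical.
From HB Require Import structures.
From mathcomp Require Import all_boot all_order all_algebra all_field.
From mathcomp Require Import Rstruct complex.
Import Order.TTheory GRing.Theory Num.Theory.
Set Implicit Arguments. Unset Strict Implicit. Unset Printing Implicit Defensive.

(** * Real-analytic functions *)

Section RealAnalytic.
Local Open Scope R_scope.

Definition analytic_at (u : R -> R) (x0 : R) : Prop :=
  exists r, 0 < r /\ exists c : nat -> R,
    forall h, Rabs h < r -> is_pseries c h (u (x0 + h)).

Lemma continuity_pt_ball (f : R -> R) (x : R) : continuity_pt f x ->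
  forall eps, 0 < eps ->
  exists d, 0 < d /\ forall h, Rabs h < d -> Rabs (f (x + h) - f x) < eps.
Proof.
move=> Hf eps Heps; have [d [Hd Hball]] := Hf eps Heps.
exists d; split=> // h Hh.
have [->|Hh0] := Req_dec h 0; first by rewrite Rplus_0_r Rminus_diag Rabs_R0.
apply: (Hball (x + h)); split; first by split=> //; lra.
by rewrite /= /Rdist Rplus_minus_l.
Qed.

Lemma continuity_pt_eq0_left (f : R -> R) (x r : R) : 0 < r -> continuity_pt f x ->
  (forall h, - r < h < 0 -> f (x + h) = 0) -> f x = 0.
Proof.
move=> Hr Hf Hz; apply: NNPP => Hfx.
have [d [Hd Hball]] := continuity_pt_ball Hf (Rabs_pos_lt _ Hfx).
have Hmin : 0 < Rmin d r by apply: Rmin_pos.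
have Hh : - r < - Rmin d r / 2 < 0 by have := Rmin_r d r; lra.
have := Hball (- Rmin d r / 2).
rewrite Hz // Rminus_0_l Rabs_Ropp Rabs_left; last lra.
have := Rmin_l d r; lra.
Qed.

Lemma ex_pseries_le_CV_radius (c : nat -> R) (x : R) :
  ex_pseries c x -> Rbar_le (Rabs x) (CV_radius c).
Proof.
move=> Hx; apply: (proj1 (CV_radius_bounded c)).
have /is_lim_seq_Reals/cv_cvabs Hlim := ex_series_lim_0 _ Hx.
have [M HM] := cauchy_bound _ (CV_Cauchy _ (exist _ _ Hlim)).
exists M => k; apply: HM; exists k.
by rewrite pow_n_pow /scal /= /mult /= !Rabs_mult RPow_abs Rabs_Rabsolu Rmult_comm.
Qed.

Lemma ex_pseries_ball_CV_radius (c : nat -> R) (r : R) :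
  (forall h, Rabs h < r -> ex_pseries c h) ->
  forall h, Rabs h < r -> Rbar_lt (Rabs h) (CV_radius c).
Proof.
move=> Hc h Hh; pose y := (Rabs h + r) / 2.
have Hy : 0 <= y by have := Rabs_pos h; rewrite /y; lra.
apply: Rbar_lt_le_trans (ex_pseries_le_CV_radius (Hc y _)); rewrite (Rabs_pos_eq y Hy) /=.
all: rewrite /y; lra.
Qed.

Lemma analytic_at_const (k x0 : R) : analytic_at (fun _ => k) x0.
Proof.
exists 1; split; first lra.
exists (fun n => if n is O then k else 0) => h _.
apply: filterlim_ext (filterlim_const k).
elim=> [|n IH]; rewrite ?sum_O ?sum_Sn -?IH /=.
- by rewrite scal_one.
- by rewrite scal_zero_r plus_zero_r.
Qed.

Lemma analytic_at_plus (u v : R -> R) (x0 : R) :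
  analytic_at u x0 -> analytic_at v x0 -> analytic_at (fun t => u t + v t) x0.
Proof.
move=> [r1 [Hr1 [c1 H1]]] [r2 [Hr2 [c2 H2]]].
exists (Rmin r1 r2); split; first exact: Rmin_pos.
exists (PS_plus c1 c2) => h Hh.
apply: (is_pseries_plus c1 c2 h (u (x0 + h)) (v (x0 + h))).
- by apply: H1; apply: Rlt_le_trans Hh (Rmin_l _ _).
- by apply: H2; apply: Rlt_le_trans Hh (Rmin_r _ _).
Qed.

Lemma analytic_at_opp (u : R -> R) (x0 : R) :
  analytic_at u x0 -> analytic_at (fun t => - u t) x0.
Proof.
move=> [r [Hr [c Hc]]]; exists r; split=> //.
exists (PS_opp c) => h /Hc; exact: is_pseries_opp.
Qed.

Lemma analytic_at_mult (u v : R -> R) (x0 : R) :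
  analytic_at u x0 -> analytic_at v x0 -> analytic_at (fun t => u t * v t) x0.
Proof.
move=> [r1 [Hr1 [c1 H1]]] [r2 [Hr2 [c2 H2]]].
exists (Rmin r1 r2); split; first exact: Rmin_pos.
exists (PS_mult c1 c2) => h Hh.
have Hh1 : Rabs h < r1 by apply: Rlt_le_trans Hh (Rmin_l _ _).
have Hh2 : Rabs h < r2 by apply: Rlt_le_trans Hh (Rmin_r _ _).
apply: is_pseries_mult; [exact: H1|exact: H2| |].
- by apply: (ex_pseries_ball_CV_radius (r := r1)) => // y /H1; exists (u (x0 + y)).
- by apply: (ex_pseries_ball_CV_radius (r := r2)) => // y /H2; exists (v (x0 + y)).
Qed.

Lemma analytic_at_continuity (u : R -> R) (x0 : R) : analytic_at u x0 ->
  forall eps, 0 < eps ->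
  exists d, 0 < d /\ forall h, Rabs h < d -> Rabs (u (x0 + h) - u x0) < eps.
Proof.
move=> [r [Hr [c Hc]]] eps Heps.
have Hc0 : Rbar_lt (Rabs 0) (CV_radius c).
  apply: (ex_pseries_ball_CV_radius (r := r)); last by rewrite Rabs_R0.
  by move=> y /Hc; exists (u (x0 + y)).
have [d [Hd Hball]] := continuity_pt_ball (PSeries_continuity _ _ Hc0) Heps.
exists (Rmin d r); split; first exact: Rmin_pos.
move=> h Hh; have Hhr : Rabs h < r by apply: Rlt_le_trans Hh (Rmin_r _ _).
rewrite -(is_pseries_unique _ _ _ (Hc h Hhr)) -(Rplus_0_r x0).
rewrite -(is_pseries_unique _ _ _ (Hc 0 _)); last by rewrite Rabs_R0.
have := Hball h; rewrite Rplus_0_l; apply; apply: Rlt_le_trans Hh (Rmin_l _ _).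
Qed.

Lemma PSeries_eq0_left_coef0 (c : nat -> R) (r : R) : 0 < r ->
  (forall h, Rabs h < r -> ex_pseries c h) ->
  (forall h, - r < h < 0 -> PSeries c h = 0) -> c O = 0.
Proof.
move=> Hr Hc Hz; rewrite -PSeries_0.
apply: (continuity_pt_eq0_left Hr); last by move=> h Hh; rewrite Rplus_0_l; exact: Hz.
by apply: PSeries_continuity; apply: (ex_pseries_ball_CV_radius Hc); rewrite Rabs_R0.
Qed.

Lemma PSeries_eq0_left_coef (c : nat -> R) (r : R) : 0 < r ->
  (forall h, Rabs h < r -> ex_pseries c h) ->
  (forall h, - r < h < 0 -> PSeries c h = 0) -> forall k, c k = 0.
Proof.
move=> Hr + + k; elim: k c => [|k IH] c Hc Hz; first exact: PSeries_eq0_left_coef0 Hc Hz.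
have Hc0 := PSeries_eq0_left_coef0 Hr Hc Hz.
apply: (IH (PS_decr_1 c)).
- move=> h /Hc; apply: ex_pseries_decr_1.
  by have [->|Hh0] := Req_dec h 0; [left|right; exists (/ h); exact: Rinv_l].
- move=> h Hh; have := Hz h Hh; rewrite PSeries_decr_1_aux //.
  by case/Rmult_integral => //; lra.
Qed.

Lemma analytic_at_eq0_left (u : R -> R) (x e : R) : analytic_at u x -> 0 < e ->
  (forall h, - e < h < 0 -> u (x + h) = 0) ->
  exists r, 0 < r /\ forall h, Rabs h < r -> u (x + h) = 0.
Proof.
move=> [r [Hr [c Hc]]] He Hz; exists r; split=> // h Hh.
have Hre := Rmin_l r e; have Her := Rmin_r r e.
have Hc0 : forall k, c k = 0.
  apply: (PSeries_eq0_left_coef (r := Rmin r e)); first exact: Rmin_pos.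
  - by move=> y Hy; exists (u (x + y)); apply: Hc; lra.
  - move=> y Hy; rewrite (is_pseries_unique _ _ _ (Hc y _)); first by apply: Hz; lra.
    by rewrite Rabs_left; lra.
by rewrite -(is_pseries_unique _ _ _ (Hc h Hh)) (PSeries_ext _ _ h Hc0) PSeries_const_0.
Qed.

(* If u vanished on (a, a + d), let S be the supremum of the s such that u
   vanishes on (a, s).  Then u vanishes on a left neighbourhood of S, hence on
   a neighbourhood of S, contradicting either u b <> 0 or the choice of S. *)
Lemma analytic_nonzero_near_left_end (u : R -> R) (a b : R) : a < b ->
  (forall x, a <= x <= b -> analytic_at u x) -> u b <> 0 ->
  forall d, 0 < d -> exists t, a < t < a + d /\ t <= b /\ u t <> 0.
Proof.
move=> Hab Hu Hb d Hd; apply: NNPP => Hno.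
pose E s := a <= s <= b /\ forall t, a < t < s -> u t = 0.
have Hd1 := Rmin_l (a + d) b; have Hd2 := Rmin_r (a + d) b.
have Ha : a < Rmin (a + d) b by apply: Rmin_glb_lt; lra.
have Ed : E (Rmin (a + d) b).
  split=> [|t Ht]; first lra.
  by apply: NNPP => Hut; apply: Hno; exists t; split; [|split]; lra.
have [S [HS HSlub]] :=
  completeness E (ex_intro _ b (fun s Es => proj2 (proj1 Es))) (ex_intro _ _ Ed).
have HdS := HS _ Ed.
have HSb : S <= b by apply: HSlub => s [[_ ?] _].
have HzS : forall t, a < t < S -> u t = 0.
  move=> t Ht; apply: NNPP => Hut.
  suff /HSlub : is_upper_bound E t by lra.
  by move=> s [_ Hs]; apply: Rnot_lt_le => Hts; apply: Hut; apply: Hs; lra.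
have [r [Hr Hr0]] : exists r, 0 < r /\ forall h, Rabs h < r -> u (S + h) = 0.
  apply: (analytic_at_eq0_left (e := S - a)); [apply: Hu; lra|lra|].
  by move=> h Hh; apply: HzS; lra.
have [ESb|HSb'] := Req_dec S b.
  by apply: Hb; rewrite -ESb -(Rplus_0_r S); apply: Hr0; rewrite Rabs_R0.
have Hs1 := Rmin_l (S + r / 2) b; have Hs2 := Rmin_r (S + r / 2) b.
have HSs : S < Rmin (S + r / 2) b by apply: Rmin_glb_lt; lra.
suff /HS : E (Rmin (S + r / 2) b) by lra.
split=> [|t Ht]; first lra.
have [HtS|HtS] := Rlt_dec t S; first by apply: HzS; lra.
by rewrite -(Rplus_minus S t); apply: Hr0; rewrite Rabs_pos_eq; lra.
Qed.

End RealAnalytic.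

(** * Analytic functions on [0, 1] *)

Local Open Scope ring_scope.

Definition real_analytic01 (u : RR -> RR) : Prop :=
  exists g, (forall x, 0 <= x <= 1 -> analytic_at g x) /\
            (forall t, 0 <= t <= 1 -> g t = u t).

Lemma real_analytic01_ext (u v : RR -> RR) :
  (forall t, 0 <= t <= 1 -> u t = v t) -> real_analytic01 u -> real_analytic01 v.
Proof. by move=> Euv [g [Hg E]]; exists g; split=> // t Ht; rewrite E ?Euv. Qed.

Lemma real_analytic01_const (k : RR) : real_analytic01 (fun _ => k).
Proof. by exists (fun _ => k); split=> // x _; apply: analytic_at_const. Qed.

Lemma real_analytic01_add (u v : RR -> RR) :
  real_analytic01 u -> real_analytic01 v -> real_analytic01 (fun t => u t + v t).
Proof.
move=> [g1 [H1 E1]] [g2 [H2 E2]]; exists (fun t => g1 t + g2 t); split.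
- by move=> x Hx; apply: analytic_at_plus; [apply: H1|apply: H2].
- by move=> t Ht; rewrite E1 ?E2.
Qed.

Lemma real_analytic01_opp (u : RR -> RR) :
  real_analytic01 u -> real_analytic01 (fun t => - u t).
Proof.
move=> [g [H E]]; exists (fun t => - g t); split.
- by move=> x Hx; apply: analytic_at_opp; apply: H.
- by move=> t Ht; rewrite E.
Qed.

Lemma real_analytic01_mul (u v : RR -> RR) :
  real_analytic01 u -> real_analytic01 v -> real_analytic01 (fun t => u t * v t).
Proof.
move=> [g1 [H1 E1]] [g2 [H2 E2]]; exists (fun t => g1 t * g2 t); split.
- by move=> x Hx; apply: analytic_at_mult; [apply: H1|apply: H2].
- by move=> t Ht; rewrite E1 ?E2.
Qed.

Lemma real_analytic01_continuous0 (u : RR -> RR) : real_analytic01 u ->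
  forall eps, 0 < eps -> exists2 d, 0 < d &
    forall t, 0 <= t -> t < d -> t <= 1 -> `|u t - u 0| < eps.
Proof.
move=> [g [Hg E]] eps /RltP Heps.
have Hg0 : analytic_at g 0 by apply: Hg; rewrite lexx ler01.
have [d [/RltP Hd Hball]] := analytic_at_continuity Hg0 Heps.
exists d => // t Ht0 Htd Ht1.
rewrite -!E ?lexx ?ler01 ?Ht0 ?Ht1 //.
apply/RltP; rewrite -RabsE -RminusE -[t]add0r; apply: Hball.
by rewrite RabsE ger0_norm //; apply/RltP.
Qed.

Lemma real_analytic01_nonzero_near0 (u : RR -> RR) : real_analytic01 u -> u 1 != 0 ->
  forall d, 0 < d -> exists t, [/\ 0 < t, t < d, t <= 1 & u t != 0].
Proof.
move=> [g [Hg E]] Hu1 d /RltP Hd.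
have Hg' : forall x, Rle 0 x /\ Rle x 1 -> analytic_at g x.
  by move=> x [/RleP ? /RleP ?]; apply: Hg; apply/andP.
have Hg1 : g 1 <> 0 by rewrite E ?lexx ?ler01 //; apply/eqP.
have [t [[/RltP Ht0 Htd] [/RleP Ht1 Hgt]]] :=
  analytic_nonzero_near_left_end Rlt_0_1 Hg' Hg1 Hd.
exists t; split=> //; first by apply/RltP; rewrite -[d]add0r.
by rewrite -E ?Ht1 ?ltW //; apply/eqP.
Qed.

(* Coquelicot's power series are real, so a complex function is analytic
   through its real and imaginary parts. *)
Definition analytic01 (f : RR -> CC) : Prop :=
  real_analytic01 (fun t => complex.Re (f t)) /\ real_analytic01 (fun t => complex.Im (f t)).

Lemma analytic01_ext (f g : RR -> CC) :
  (forall t, 0 <= t <= 1 -> f t = g t) -> analytic01 f -> analytic01 g.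
Proof.
by move=> E [Hre Him]; split; [apply: real_analytic01_ext Hre|apply: real_analytic01_ext Him];
  move=> t /E ->.
Qed.

Lemma analytic01_const (k : CC) : analytic01 (fun _ => k).
Proof. by split; apply: real_analytic01_const. Qed.

Lemma analytic01_add (f g : RR -> CC) :
  analytic01 f -> analytic01 g -> analytic01 (fun t => f t + g t).
Proof.
move=> [Ref Imf] [Reg Img]; split.
- by apply: real_analytic01_ext (real_analytic01_add Ref Reg) => t _; rewrite raddfD.
- by apply: real_analytic01_ext (real_analytic01_add Imf Img) => t _; rewrite raddfD.
Qed.

Lemma analytic01_opp (f : RR -> CC) : analytic01 f -> analytic01 (fun t => - f t).
Proof.
move=> [Ref Imf]; split.
- by apply: real_analytic01_ext (real_analytic01_opp Ref) => t _; rewrite raddfN.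
- by apply: real_analytic01_ext (real_analytic01_opp Imf) => t _; rewrite raddfN.
Qed.

Lemma analytic01_conj (f : RR -> CC) : analytic01 f -> analytic01 (fun t => conjc (f t)).
Proof.
move=> [Ref Imf]; split.
- by apply: real_analytic01_ext Ref => t _; case: (f t).
- by apply: real_analytic01_ext (real_analytic01_opp Imf) => t _; case: (f t).
Qed.

Lemma analytic01_mul (f g : RR -> CC) :
  analytic01 f -> analytic01 g -> analytic01 (fun t => f t * g t).
Proof.
move=> [Ref Imf] [Reg Img]; split.
- apply: real_analytic01_ext (real_analytic01_add (real_analytic01_mul Ref Reg)
    (real_analytic01_opp (real_analytic01_mul Imf Img))) => t _.
  by case: (f t) => ? ?; case: (g t).
- apply: real_analytic01_ext (real_analytic01_add (real_analytic01_mul Ref Img)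
    (real_analytic01_mul Imf Reg)) => t _.
  by case: (f t) => ? ?; case: (g t).
Qed.

Lemma normr_Re_le_cmod (z : CC) : `|complex.Re z| <= cmod z.
Proof. by case: z => x y; rewrite /cmod -sqrtr_sqr ler_wsqrtr // lerDl sqr_ge0. Qed.

Lemma normr_Im_le_cmod (z : CC) : `|complex.Im z| <= cmod z.
Proof. by case: z => x y; rewrite /cmod -sqrtr_sqr ler_wsqrtr // lerDr sqr_ge0. Qed.

Lemma cmod_le_Re_Im (z : CC) : cmod z <= `|complex.Re z| + `|complex.Im z|.
Proof.
rewrite /cmod -[X in _ <= X]ger0_norm ?addr_ge0 // -sqrtr_sqr ler_wsqrtr //.
by rewrite sqrrD !real_normK ?num_real // -addrA lerD2l lerDr mulrn_wge0 ?mulr_ge0.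
Qed.

Lemma analytic01_continuous0 (f : RR -> CC) : analytic01 f ->
  forall eps, 0 < eps -> exists2 d, 0 < d &
    forall t, 0 <= t -> t < d -> t <= 1 -> cmod (f 0 - f t) < eps.
Proof.
move=> [Ref Imf] eps Heps; have Heps2 : 0 < eps / 2 by rewrite divr_gt0.
have [d1 Hd1 C1] := real_analytic01_continuous0 Ref Heps2.
have [d2 Hd2 C2] := real_analytic01_continuous0 Imf Heps2.
exists (Num.min d1 d2) => [|t Ht0]; first by rewrite lt_min Hd1.
rewrite lt_min => /andP [Htd1 Htd2] Ht1.
apply: le_lt_trans (cmod_le_Re_Im _) _; rewrite (splitr eps) !raddfB /=.
by rewrite ltrD // distrC; [apply: C1|apply: C2].
Qed.

Lemma analytic01_nonzero_near0 (f : RR -> CC) : analytic01 f -> f 1 != 0 ->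
  forall d, 0 < d -> exists t, [/\ 0 < t, t < d, t <= 1 & f t != 0].
Proof.
move=> [Ref Imf] Hf1 d Hd.
have [HRe|HIm] : complex.Re (f 1) != 0 \/ complex.Im (f 1) != 0.
  by move: Hf1; case: (f 1) => x y; rewrite eq_complex /= negb_and; apply/orP.
- have [t [Ht0 Htd Ht1 Ht]] := real_analytic01_nonzero_near0 Ref HRe Hd.
  by exists t; split=> //; apply: contraNneq Ht => ->.
- have [t [Ht0 Htd Ht1 Ht]] := real_analytic01_nonzero_near0 Imf HIm Hd.
  by exists t; split=> //; apply: contraNneq Ht => ->.
Qed.

Lemma is_pseries_of_series_converges (P : {additive CC -> RR}) (c : nat -> CC)
    (h : RR) (l : CC) :
  (forall z r, P (z * (r%:C)%C) = P z * r) -> (forall z, `|P z| <= cmod z) ->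
  series_converges_to (fun k => c k * ((h%:C)%C) ^+ k) l ->
  is_pseries (fun k => P (c k)) h (P l).
Proof.
move=> HPm HPle Hs; apply/is_series_Reals => eps /RltP Heps.
have [N0 HN] := Hs eps Heps.
exists N0 => N /ssrnat.leP HN0.
rewrite sum_f_R0E /Rdist RabsE big_mkord.
have -> : \sum_(i < N.+1) scal (pow_n h i) (P (c i)) = P (\sum_(i < N.+1) c i * (h%:C)%C ^+ i).
  rewrite raddf_sum; apply: eq_bigr => i _.
  by rewrite -rmorphXn HPm pow_n_pow RpowE /scal /= /mult /= mulrC.
rewrite RminusE -raddfB; apply/RltP; apply: le_lt_trans (HPle _) (HN _ _).
exact: leqW.
Qed.

Lemma real_analytic01_of_analytic_on01 (P : {additive CC -> RR}) (f : RR -> CC) :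
  (forall z r, P (z * (r%:C)%C) = P z * r) -> (forall z, `|P z| <= cmod z) ->
  analytic_on01 f -> real_analytic01 (fun t => P (f t)).
Proof.
move=> HPm HPle [g [a [b [Ha Hb Hgf Hser]]]].
exists (fun t => P (g t)); split=> [x0 /andP [Hx0 Hx1]|t Ht]; last by rewrite Hgf.
have Hax : a < x0 by apply: lt_le_trans Hx0.
have Hxb : x0 < b by apply: le_lt_trans Hb.
have [r [Hr [c Hc]]] := Hser x0 (introT andP (conj Hax Hxb)).
pose r' := Num.min r (Num.min (x0 - a) (b - x0)).
exists r'; split; first by apply/RltP; rewrite !lt_min Hr !subr_gt0 Hax Hxb.
exists (fun k => P (c k)) => h /RltP; rewrite RabsE !lt_min => /and3P [Hhr Hha Hhb].
apply: is_pseries_of_series_converges => //.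
have Exh : x0 + h - x0 = h by rewrite addrC addKr.
rewrite -[in (h%:C)%C]Exh; apply: Hc; last by rewrite Exh.
move: Hha Hhb; rewrite !ltr_norml => /andP [Hha _] /andP [_ Hhb].
by rewrite -ltrBlDl -opprB Hha -ltrBrDl Hhb.
Qed.

Lemma analytic01_of_analytic_on01 (f : RR -> CC) : analytic_on01 f -> analytic01 f.
Proof.
move=> Hf; split; apply: real_analytic01_of_analytic_on01 Hf.
- by case=> x y r /=; rewrite mulr0 subr0.
- exact: normr_Re_le_cmod.
- by case=> x y r /=; rewrite mulr0 add0r.
- exact: normr_Im_le_cmod.
Qed.

Section PointwiseRingClosure.
Variables (R : comNzRingType) (Q : (RR -> R) -> Prop).
Hypothesis Q_ext : forall f g, f =1 g -> Q f -> Q g.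
Hypothesis Q_const : forall k, Q (fun _ => k).
Hypothesis Q_add : forall f g, Q f -> Q g -> Q (fun t => f t + g t).
Hypothesis Q_mul : forall f g, Q f -> Q g -> Q (fun t => f t * g t).

Lemma pointwise_closed_sum (I : Type) (r : seq I) (P : pred I) (F : I -> RR -> R) :
  (forall i, Q (F i)) -> Q (fun t => \sum_(i <- r | P i) F i t).
Proof.
move=> HF; elim: r => [|i r IH]; first by apply: Q_ext (Q_const 0) => t; rewrite big_nil.
by case: (boolP (P i)) => Pi; [apply: Q_ext (Q_add (HF i) IH)|apply: Q_ext IH];
  move=> t; rewrite big_cons ?Pi ?(negbTE Pi).
Qed.

Lemma pointwise_closed_prod (I : Type) (r : seq I) (P : pred I) (F : I -> RR -> R) :
  (forall i, Q (F i)) -> Q (fun t => \prod_(i <- r | P i) F i t).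
Proof.
move=> HF; elim: r => [|i r IH]; first by apply: Q_ext (Q_const 1) => t; rewrite big_nil.
by case: (boolP (P i)) => Pi; [apply: Q_ext (Q_mul (HF i) IH)|apply: Q_ext IH];
  move=> t; rewrite big_cons ?Pi ?(negbTE Pi).
Qed.

Lemma pointwise_closed_det n (A : RR -> 'M[R]_n) :
  (forall i j, Q (fun t => A t i j)) -> Q (fun t => \det (A t)).
Proof.
move=> HA; apply: pointwise_closed_sum => s.
by apply: Q_mul; [exact: Q_const|apply: pointwise_closed_prod => i; exact: HA].
Qed.

End PointwiseRingClosure.

Lemma analytic01_sum (I : Type) (r : seq I) (P : pred I) (F : I -> RR -> CC) :
  (forall i, analytic01 (F i)) -> analytic01 (fun t => \sum_(i <- r | P i) F i t).
Proof.
apply: pointwise_closed_sum; [|exact: analytic01_const|exact: analytic01_add].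
by move=> f g E; apply: analytic01_ext => t _.
Qed.

Lemma analytic01_det n (A : RR -> 'M[CC]_n) :
  (forall i j, analytic01 (fun t => A t i j)) -> analytic01 (fun t => \det (A t)).
Proof.
apply: pointwise_closed_det; [|exact: analytic01_const|exact: analytic01_add|exact: analytic01_mul].
by move=> f g E; apply: analytic01_ext => t _.
Qed.

Lemma analytic01_muln (f : RR -> CC) k : analytic01 f -> analytic01 (fun t => f t *+ k).
Proof.
move=> Hf; apply: analytic01_ext (analytic01_mul Hf (analytic01_const k%:R)) => t _.
by rewrite mulr_natr.
Qed.

Definition coef_analytic01 (P : RR -> {poly CC}) : Prop :=
  forall k, analytic01 (fun t => (P t)`_k).

Lemma coef_analytic01_const (p : {poly CC}) : coef_analytic01 (fun _ => p).
Proof. by move=> k; apply: analytic01_const. Qed.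

Lemma coef_analytic01_add (P Q : RR -> {poly CC}) :
  coef_analytic01 P -> coef_analytic01 Q -> coef_analytic01 (fun t => P t + Q t).
Proof.
by move=> HP HQ k; apply: analytic01_ext (analytic01_add (HP k) (HQ k)) => t _; rewrite coefD.
Qed.

Lemma coef_analytic01_opp (P : RR -> {poly CC}) :
  coef_analytic01 P -> coef_analytic01 (fun t => - P t).
Proof. by move=> HP k; apply: analytic01_ext (analytic01_opp (HP k)) => t _; rewrite coefN. Qed.

Lemma coef_analytic01_mul (P Q : RR -> {poly CC}) :
  coef_analytic01 P -> coef_analytic01 Q -> coef_analytic01 (fun t => P t * Q t).
Proof.
move=> HP HQ k; apply: analytic01_ext => [t _|]; first by rewrite coefM.
by apply: analytic01_sum => i; apply: analytic01_mul.
Qed.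

Lemma coef_analytic01_polyC (f : RR -> CC) : analytic01 f -> coef_analytic01 (fun t => (f t)%:P).
Proof.
move=> Hf k; apply: analytic01_ext (_ : analytic01 (fun t => f t *+ (k == 0)%N)) => [t _|].
  by rewrite coefC mulrb.
exact: analytic01_muln.
Qed.

Lemma coef_analytic01_deriv (P : RR -> {poly CC}) :
  coef_analytic01 P -> coef_analytic01 (fun t => (P t)^`()).
Proof.
by move=> HP k; apply: analytic01_ext (analytic01_muln k.+1 (HP k.+1)) => t _; rewrite coef_deriv.
Qed.

Lemma coef_analytic01_char_poly n (M : RR -> 'M[CC]_n) :
  (forall i j, analytic01 (fun t => M t i j)) -> coef_analytic01 (fun t => char_poly (M t)).
Proof.
move=> HM; apply: pointwise_closed_det => [P Q E HP k||||i j].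
- by apply: analytic01_ext (HP k) => t _; rewrite E.
- exact: coef_analytic01_const.
- exact: coef_analytic01_add.
- exact: coef_analytic01_mul.
have := coef_analytic01_add (coef_analytic01_const ('X *+ (i == j)))
  (coef_analytic01_opp (coef_analytic01_polyC (HM i j))).
by move=> H k; apply: analytic01_ext (H k) => t _; rewrite !mxE.
Qed.

(** * Discriminants and singular values *)

(* Unlike [Sylvester_mx p q], whose size depends on [size p] and [size q],
   this matrix has a fixed size and can vary along a path of polynomials. *)
Definition sylvester_mx (R : nzRingType) (d1 d2 : nat) (p q : {poly R}) : 'M[R]_(d1 + d2) :=
  \matrix_(i, j) match fintype.split i with
                 | inl k => p`_(j - k) *+ (k <= j) | inr k => q`_(j - k) *+ (k <= j) end.

Lemma resultant_sylvester_mx (R : nzRingType) (p q : {poly R}) d1 d2 :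
  size q = d1.+1 -> size p = d2.+1 -> resultant p q = \det (sylvester_mx d1 d2 p q).
Proof.
move=> Hq Hp; suff -> : resultant p q = \det (sylvester_mx (size q).-1 (size p).-1 p q).
  by rewrite Hq Hp.
by rewrite /resultant; congr (\det _); apply/matrixP => i j; rewrite Sylvester_mxE mxE.
Qed.

Lemma size_deriv_num (R : numDomainType) (p : {poly R}) : size p^`() = (size p).-1.
Proof.
have [lep1|lt1p] := leqP (size p) 1.
  by rewrite [p]size1_polyC // derivC size_poly0 size_polyC; case: eqP.
have Ep : (size p).-2.+1 = (size p).-1 by case: (size p) lt1p => [|[|k]].
rewrite size_poly_eq // mulrn_eq0 Ep -lead_coefE lead_coef_eq0 -size_poly_eq0.
by case: (size p) lt1p => [|[|k]].
Qed.

Lemma separable_resultant (R : idomainType) (p : {poly R}) :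
  p != 0 -> separable_poly p = (resultant p p^`() != 0).
Proof.
move=> p0; rewrite separable_poly.unlock resultant_eq0 /coprimep -leqNgt.
have : gcdp p p^`() != 0 by rewrite gcdp_eq0 negb_and p0.
by rewrite -size_poly_gt0; case: (size _) => [|[|k]].
Qed.

(* For [n = 0] the matrix is empty and both sides are [true]. *)
Lemma separable_det_sylvester (R : numDomainType) (p : {poly R}) n : size p = n.+1 ->
  separable_poly p = (\det (sylvester_mx n.-1 n p p^`()) != 0).
Proof.
move=> Hp; have Hp' : size p^`() = n by rewrite size_deriv_num Hp.
case: n Hp Hp' => [|n] Hp Hp'.
  move/eqP: Hp'; rewrite size_poly_eq0 => /eqP p'0.
  by rewrite separable_poly.unlock p'0 /coprimep gcdp0 Hp det_mx00 oner_neq0.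
by rewrite -resultant_sylvester_mx // separable_resultant // -size_poly_gt0 Hp.
Qed.

Lemma analytic01_det_sylvester d1 d2 (P Q : RR -> {poly CC}) :
  coef_analytic01 P -> coef_analytic01 Q ->
  analytic01 (fun t => \det (sylvester_mx d1 d2 (P t) (Q t))).
Proof.
move=> HP HQ; apply: analytic01_det => i j.
apply: analytic01_ext (_ : analytic01 (fun t => match fintype.split i with
  | inl k => (P t)`_(j - k) *+ (k <= j) | inr k => (Q t)`_(j - k) *+ (k <= j) end)) => [t _|].
  by rewrite mxE.
by case: (fintype.split i) => k; apply: analytic01_muln.
Qed.

Lemma adjmxM m n p (X : 'M[CC]_(m, n)) (Y : 'M[CC]_(n, p)) :
  adjmx (X *m Y) = adjmx Y *m adjmx X.
Proof. by rewrite /adjmx map_mxM trmx_mul. Qed.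

Lemma adjmxK m n (X : 'M[CC]_(m, n)) : adjmx (adjmx X) = X.
Proof. by apply/matrixP => i j; rewrite !mxE conjcK. Qed.

Lemma mul_adjmx_rV n (x : 'rV[CC]_n) : (x *m adjmx x) 0 0 = \sum_k `|x 0 k| ^+ 2.
Proof. by rewrite mxE; apply: eq_bigr => k _; rewrite !mxE normcE sqr_sqrtc. Qed.

Lemma mul_adjmx_rV_gt0 n (x : 'rV[CC]_n) : x != 0 -> 0 < (x *m adjmx x) 0 0.
Proof.
move=> nx; rewrite mul_adjmx_rV lt_def sumr_ge0 ?andbT => [|k _]; last exact: exprn_ge0.
apply: contraNneq nx => /eqP; rewrite psumr_eq0 => [/allP Hx0|k _]; last exact: exprn_ge0.
apply/eqP/rowP => k; have := Hx0 k (mem_index_enum _).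
by rewrite sqrf_eq0 normr_eq0 mxE => /eqP.
Qed.

Lemma root_char_poly_gram_ge0 m n (A : 'M[CC]_(m, n)) z :
  root (char_poly (adjmx A *m A)) z -> 0 <= z.
Proof.
rewrite -eigenvalue_root_char => /eigenvalueP [v Hv /mul_adjmx_rV_gt0 Hvv].
pose w := v *m adjmx A.
have Ew : (w *m adjmx w) 0 0 = z * (v *m adjmx v) 0 0.
  by rewrite /w adjmxM adjmxK !mulmxA -(mulmxA v) Hv -scalemxAl mxE.
rewrite -(pmulr_lge0 _ Hvv) -Ew mul_adjmx_rV sumr_ge0 // => k _; exact: exprn_ge0.
Qed.

Lemma distinct_singular_valuesP m n (A : 'M[CC]_(m, n)) :
  distinct_singular_values A <-> separable_poly (char_poly (adjmx A *m A)).
Proof.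
split=> [[s [[_ Hs0 ->] Hsu]]|HP].
  rewrite -(big_map (fun x : RR => ((x ^+ 2)%:C)%C) xpredT (fun z => 'X - z%:P)).
  rewrite separable_prod_XsubC map_inj_in_uniq // => x y Hx Hy /complexI /eqP.
  by move/allP: Hs0 => Hs0; rewrite eqrXn2 ?Hs0 // => /eqP.
set P := char_poly _ in HP *.
have [r Hr] := closed_field_poly_normal P.
rewrite (monicP (char_poly_monic _)) scale1r in Hr.
have Hr0 z : z \in r -> 0 <= z.
  by move=> Hz; apply: (@root_char_poly_gram_ge0 _ _ A); rewrite -/P Hr root_prod_XsubC.
have ReK z : z \in r -> ((complex.Re z)%:C)%C = z.
  by move/Hr0 => Hz; apply: RRe_real; apply: ger0_real.
have HRe0 z : z \in r -> 0 <= complex.Re z by move/Hr0; rewrite lecE => /andP [].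
exists [seq Num.sqrt (complex.Re z) | z <- r]; split; [split|].
- by apply: succn_inj; rewrite size_map -(size_prod_XsubC r id) -Hr size_char_poly.
- by apply/allP => _ /mapP [z _ ->]; apply: sqrtr_ge0.
- by rewrite -/P {1}Hr big_map; apply: eq_big_seq => z Hz; rewrite sqr_sqrtr ?HRe0 ?ReK.
- rewrite map_inj_in_uniq; first by rewrite Hr separable_prod_XsubC in HP.
  move=> x y Hx Hy /(congr1 (fun u => u ^+ 2)).
  by rewrite !sqr_sqrtr ?HRe0 // => E; rewrite -(ReK x) // -(ReK y) // E.
Qed.

(** * Analytic paths of matrices *)

Lemma frob_le_entrywise m n (X : 'M[CC]_(m, n)) (eta : RR) : 0 <= eta ->
  (forall i j, cmod (X i j) <= eta) -> frob X <= Num.sqrt (m * n)%:R * eta.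
Proof.
move=> He HX; rewrite -(ger0_norm He) -sqrtr_sqr -sqrtrM ?ler0n // ler_wsqrtr //.
apply: le_trans (_ : \sum_(i < m) \sum_(j < n) eta ^+ 2 <= _).
  by apply: ler_sum => i _; apply: ler_sum => j _; rewrite lerXn2r ?nnegrE ?sqrtr_ge0.
by rewrite !sumr_const !card_ord -mulrnA mulr_natl mulnC.
Qed.

Lemma finite_common_radius (T : finType) (P : T -> RR -> Prop) :
  (forall x d d', 0 < d' -> d' <= d -> P x d -> P x d') ->
  (forall x, exists2 d, 0 < d & P x d) -> exists2 d, 0 < d & forall x, P x d.
Proof.
move=> Pmono Hex.
suff [d Hd HdP] : exists2 d, 0 < d & forall x, x \in enum T -> P x d.
  by exists d => // x; apply: HdP; rewrite mem_enum.
elim: (enum T) => [|x s [d Hd HdP]]; first by exists 1.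
have [dx Hdx Px] := Hex x; have Hmin : 0 < Num.min d dx by rewrite lt_min Hd.
exists (Num.min d dx) => // y; rewrite in_cons => /orP [/eqP ->|Hy].
  by apply: Pmono Px; rewrite // ge_min lexx orbT.
by apply: Pmono (HdP y Hy); rewrite // ge_min lexx.
Qed.

Section AnalyticPath.
Variables (m n : nat) (p : RR -> 'M[CC]_(m, n)).
Hypothesis p_analytic : forall i j, analytic01 (fun t => p t i j).

Lemma analytic_path_frob_continuous0 (eps : RR) : 0 < eps ->
  exists2 d, 0 < d & forall t, 0 <= t -> t < d -> t <= 1 -> frob (p 0 - p t) < eps.
Proof.
move=> Heps; pose s : RR := Num.sqrt (m * n)%:R; pose eta := eps / (s + 1).
have Hs : 0 < s + 1 by rewrite ltr_wpDl ?sqrtr_ge0.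
have Heta : 0 < eta by rewrite divr_gt0.
have [d Hd Hclose] := @finite_common_radius _
  (fun ij d => forall t, 0 <= t -> t < d -> t <= 1 -> cmod (p 0 ij.1 ij.2 - p t ij.1 ij.2) < eta)
  (fun ij d d' _ Hdd H t Ht0 Htd => H t Ht0 (lt_le_trans Htd Hdd))
  (fun ij => analytic01_continuous0 (p_analytic ij.1 ij.2) Heta).
exists d => // t Ht0 Htd Ht1.
apply: le_lt_trans (frob_le_entrywise (ltW Heta) _) _ => [i j|].
  by rewrite !mxE; apply/ltW/(Hclose (i, j)).
by rewrite mulrA ltr_pdivrMr // mulrDr mulr1 mulrC ltrDl.
Qed.

Lemma analytic_path_gram i j : analytic01 (fun t => (adjmx (p t) *m p t) i j).
Proof.
apply: analytic01_ext (_ : analytic01 (fun t => \sum_l conjc (p t l i) * p t l j)) => [t _|].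
  by rewrite !mxE; apply: eq_bigr => l _; rewrite !mxE.
by apply: analytic01_sum => l; apply: analytic01_mul (analytic01_conj _) _.
Qed.

Lemma analytic_path_distinct_singular_values_near0 :
  distinct_singular_values (p 1) -> forall d, 0 < d ->
  exists t, [/\ 0 < t, t < d, t <= 1 & distinct_singular_values (p t)].
Proof.
pose P t := char_poly (adjmx (p t) *m p t).
have HP : coef_analytic01 P := coef_analytic01_char_poly analytic_path_gram.
have sepP t : separable_poly (P t) = (\det (sylvester_mx n.-1 n (P t) (P t)^`()) != 0).
  by apply: separable_det_sylvester; rewrite size_char_poly.
have Hdisc := analytic01_det_sylvester n.-1 n HP (coef_analytic01_deriv HP).
move=> /distinct_singular_valuesP Hp1 d Hd.
have Hdisc1 : \det (sylvester_mx n.-1 n (P 1) (P 1)^`()) != 0 by rewrite -sepP.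
have [t [Ht0 Htd Ht1 Hdt]] := analytic01_nonzero_near0 Hdisc Hdisc1 Hd.
by exists t; split=> //; apply/distinct_singular_valuesP; rewrite -/(P t) sepP.
Qed.

End AnalyticPath.

Theorem theorem4p7 (m n : nat) (Hmn : (n <= m)%N)
    (Gamma : 'M[CC]_(m, n) -> Prop) :
  analytic_path_connected Gamma ->
  (exists A0, Gamma A0 /\ distinct_singular_values A0) ->
  forall A, Gamma A -> forall eps : RR, 0 < eps ->
    exists B, [/\ Gamma B, distinct_singular_values B & frob (A - B) < eps].
Proof.
move=> Hpath [A0 [HA0 HdA0]] A HA eps Heps.
have [p [p0 p1 HpGamma Hp]] := Hpath A A0 HA HA0.
have p_analytic i j : analytic01 (fun t => p t i j) by apply: analytic01_of_analytic_on01.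
have [d Hd Hclose] := analytic_path_frob_continuous0 p_analytic Heps.
rewrite -p1 in HdA0.
have [t [Ht0 Htd Ht1 Hdt]] := analytic_path_distinct_singular_values_near0 p_analytic HdA0 Hd.
exists (p t); split; [by apply: HpGamma; rewrite (ltW Ht0) Ht1|exact: Hdt|].
by rewrite -p0; apply: Hclose (ltW Ht0) Htd Ht1.
Qed.
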